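(* Let $C\subseteq V(K_n\times K_m)$ satisfy: (1) there exist $1\le n_1<n_2<n_3\le n$ and $1\le m_1<m_2<m_3\le m$ with $(n_1,m_1),(n_2,m_2),(n_3,m_3)\in C$; (2) every $v\in C$ is row-isolated or column-isolated in $C$; (3) $rs(C)=m$ and $cs(C)=n$; (4) at most one vertex of $C$ is isolated in $C$. Then $C$ is an identifying code of $K_n\times K_m$.
   Context: $K_n\times K_m$ is the direct product of complete graphs: vertex set $[n]\times[m]$, with $(i,r)$ adjacent to $(j,s)$ iff $i\ne j$ and $r \ne s$. An identifying code is a dominating set $C$ with $N[x]\cap C\ne N[y]\cap C$ for all distinct vertices $x,y$ ($N[x]$ the closed neighborhood). Columns: $C_i=\{(i,t):t\in[m]\}$; rows: $R_r=\{(k,r):k\in[n]\}$. $cs(C)$ (resp. $rs(C)$) is the number of columns (resp. rows) meeting $C$. A vertex $v=(i,r)$ is column-isolated in $C$ if $C\cap C_i=\{v\}$, row-isolated in $C$ if $C\cap R_r=\{v\}$, and isolated in $C$ if both. *)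

(* Vertices of K_n x K_m are pairs ('I_n * 'I_m) (0-based). *)
From mathcomp Require Import all_boot.
Set Implicit Arguments. Unset Strict Implicit. Unset Printing Implicit Defensive.

Section Defs.
Variables n m : nat.
Definition vert := ('I_n * 'I_m)%type.

Definition adj (x y : vert) : bool := (x.1 != y.1) && (x.2 != y.2).

Definition cnbhd (x : vert) : {set vert} := [set y | (y == x) || adj x y].

Definition dominating (C : {set vert}) : Prop :=
  forall x : vert, cnbhd x :&: C != set0.

Definition identifying_code (C : {set vert}) : Prop :=
  dominating C /\
  forall x y : vert, x != y -> cnbhd x :&: C != cnbhd y :&: C.

Definition column (i : 'I_n) : {set vert} := [set v : vert | v.1 == i].
Definition row (r : 'I_m) : {set vert} := [set v : vert | v.2 == r].

Definition cs (C : {set vert}) : nat := #|[set i : 'I_n | column i :&: C != set0]|.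
Definition rs (C : {set vert}) : nat := #|[set r : 'I_m | row r :&: C != set0]|.

Definition col_isolated (C : {set vert}) (v : vert) : bool :=
  column v.1 :&: C == [set v].
Definition row_isolated (C : {set vert}) (v : vert) : bool :=
  row v.2 :&: C == [set v].
Definition isolated (C : {set vert}) (v : vert) : bool :=
  col_isolated C v && row_isolated C v.
End Defs.

(* For a vertex x of K_n x K_m, a vertex z lies in N[x] exactly
   when z agrees with x either in both coordinates or in neither
   ([in_cnbhd]).  Hence:
   - Domination: three vertices of C with pairwise distinct columns and
     pairwise distinct rows dominate everything, since a vertex x shares its
     column with at most one of them and its row with at most one of them,
     so x agrees with one of the three in both coordinates or in neither.
   - Separation: let x = (i,r) and y = (j,s) be distinct twins, i.e.
     N[x] :&: C = N[y] :&: C.  If i = j, a vertex of C in row r separates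
     them; symmetrically if r = s.  Otherwise every vertex of C meeting
     column i or j or row r or s lies in the 2x2 grid {i,j} x {r,s}
     ([grid_closed]).  As every line of the grid meets C and every vertex of
     C is alone in its row or in its column, no line of the grid contains two
     vertices of C; so C meets the grid in a diagonal, and its two vertices
     are isolated in C, contradicting the hypothesis that at most one vertex
     is isolated. *)

From mathcomp Require Import all_boot.

Set Implicit Arguments. Unset Strict Implicit. Unset Printing Implicit Defensive.

Section ProductGraph.
Variables n m : nat.
Implicit Types (C : {set vert n m}) (x y z : vert n m).

Lemma in_cnbhd x z : (z \in cnbhd x) = ((z.1 == x.1) == (z.2 == x.2)).
Proof.
case: x z => [a b] [c d]; rewrite inE /adj xpair_eqE /= (eq_sym a) (eq_sym b).
by case: (c == a); case: (d == b).
Qed.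

Lemma col_isolatedP C v :
  v \in C -> reflect (forall z, z \in C -> z.1 = v.1 -> z = v) (col_isolated C v).
Proof.
move=> vC; apply: (iffP eqP) => [E z zC zv | H].
  by apply/set1P; rewrite -E !inE zv eqxx.
apply/setP => z; rewrite !inE; apply/andP/eqP => [[/eqP zv zC] | ->].
  exact: H.
by rewrite eqxx.
Qed.

Lemma row_isolatedP C v :
  v \in C -> reflect (forall z, z \in C -> z.2 = v.2 -> z = v) (row_isolated C v).
Proof.
move=> vC; apply: (iffP eqP) => [E z zC zv | H].
  by apply/set1P; rewrite -E !inE zv eqxx.
apply/setP => z; rewrite !inE; apply/andP/eqP => [[/eqP zv zC] | ->].
  exact: H.
by rewrite eqxx.
Qed.

Lemma columns_met C : cs C = n -> forall i, exists2 z, z \in C & z.1 = i.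
Proof.
move=> csC i; have : i \in [set i0 | column m i0 :&: C != set0].
  suff -> : [set i0 | column m i0 :&: C != set0] = setT by rewrite inE.
  by apply/eqP; rewrite eqEcard subsetT cardsT card_ord -[X in _ <= X]/(cs C) csC leqnn.
by rewrite inE => /set0Pn [z]; rewrite !inE => /andP [/eqP zi zC]; exists z.
Qed.

Lemma rows_met C : rs C = m -> forall r, exists2 z, z \in C & z.2 = r.
Proof.
move=> rsC r; have : r \in [set r0 | row n r0 :&: C != set0].
  suff -> : [set r0 | row n r0 :&: C != set0] = setT by rewrite inE.
  by apply/eqP; rewrite eqEcard subsetT cardsT card_ord -[X in _ <= X]/(rs C) rsC leqnn.
by rewrite inE => /set0Pn [z]; rewrite !inE => /andP [/eqP zr zC]; exists z.
Qed.

(* Three vertices of C in distinct columns and distinct rows dominate: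
   each x agrees in some coordinate with at most two of them. *)
Lemma dominating_of_transversal C u v w :
  u \in C -> v \in C -> w \in C ->
  [/\ u.1 <> v.1, v.1 <> w.1 & u.1 <> w.1] ->
  [/\ u.2 <> v.2, v.2 <> w.2 & u.2 <> w.2] -> dominating C.
Proof.
case: u v w => [u1 u2] [v1 v2] [w1 w2] uC vC wC /= [c12 c23 c13] [r12 r23 r13] [x1 x2].
apply/set0Pn.
have dominated_by (a : 'I_n) (b : 'I_m) :
    (a, b) \in C -> (x1 = a <-> x2 = b) -> exists z, z \in cnbhd (x1, x2) :&: C.
  move=> abC [h1 h2]; exists (a, b); rewrite inE abC in_cnbhd andbT /= (eq_sym a) (eq_sym b).
  by apply/eqP; apply/eqP/eqP.
case: (x1 =P u1) => e1; case: (x1 =P v1) => e2;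
case: (x2 =P u2) => e3; case: (x2 =P v2) => e4;
first [ by apply: (dominated_by _ _ uC); split => ?; congruence
      | by apply: (dominated_by _ _ vC); split => ?; congruence
      | by apply: (dominated_by _ _ wC); split => ?; congruence ].
Qed.

Lemma twins_membership C x y z :
  cnbhd x :&: C = cnbhd y :&: C -> z \in C ->
  ((z.1 == x.1) == (z.2 == x.2)) = ((z.1 == y.1) == (z.2 == y.2)).
Proof.
by move=> twins zC; rewrite -!in_cnbhd; move/setP/(_ z): twins; rewrite !inE zC !andbT.
Qed.

(* Twins in a common column coincide, using a vertex of C in row r. *)
Lemma twins_same_column C (i : 'I_n) (r s : 'I_m) :
  cnbhd (i, r) :&: C = cnbhd (i, s) :&: C -> rs C = m -> r = s.
Proof.
move=> twins rsC; have [z zC zr] := rows_met rsC r.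
have := twins_membership twins zC; rewrite /= zr eqxx.
by case: (eqVneq r s) => // _; case: (z.1 == i).
Qed.

(* Twins in a common row coincide, using a vertex of C in column i. *)
Lemma twins_same_row C (i j : 'I_n) (r : 'I_m) :
  cnbhd (i, r) :&: C = cnbhd (j, r) :&: C -> cs C = n -> i = j.
Proof.
move=> twins csC; have [z zC zi] := columns_met csC i.
have := twins_membership twins zC; rewrite /= zi eqxx.
by case: (eqVneq i j) => // _; case: (z.2 == r).
Qed.

(* Every vertex of C lying on one of the columns i, j lies on one of the
   rows r, s and conversely: C meets these four lines only inside the grid
   {i, j} x {r, s} (for i != j and r != s). *)
Definition grid_closed C (i j : 'I_n) (r s : 'I_m) : Prop :=
  forall z, z \in C -> ((z.1 == i) || (z.1 == j)) = ((z.2 == r) || (z.2 == s)).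

Lemma grid_closed_swap_rows C i j r s : grid_closed C i j r s -> grid_closed C i j s r.
Proof. by move=> grid z zC; rewrite [RHS]orbC grid. Qed.

Lemma grid_closed_swap_cols C i j r s : grid_closed C i j r s -> grid_closed C j i r s.
Proof. by move=> grid z zC; rewrite [LHS]orbC grid. Qed.

Lemma twins_grid_closed C (i j : 'I_n) (r s : 'I_m) :
  i != j -> r != s -> cnbhd (i, r) :&: C = cnbhd (j, s) :&: C ->
  grid_closed C i j r s.
Proof.
move=> ne_ij ne_rs twins z zC; have := twins_membership twins zC => /=.
have one_col : (z.1 == i) && (z.1 == j) = false by apply: contraNF ne_ij => /andP[/eqP <-].
have one_row : (z.2 == r) && (z.2 == s) = false by apply: contraNF ne_rs => /andP[/eqP <-].
by move: one_col one_row; case: (z.1 == i); case: (z.1 == j); case: (z.2 == r); case: (z.2 == s).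
Qed.

Lemma isolated_mem C v : isolated C v -> v \in C.
Proof.
case/andP => /eqP col_v _.
by have /setIP[] : v \in column m v.1 :&: C by rewrite col_v set11.
Qed.

Lemma isolated_unique C u v :
  #|[set w in C | isolated C w]| <= 1 -> isolated C u -> isolated C v -> u = v.
Proof.
move=> at_most_one u_iso v_iso; apply: (card_le1_eqP at_most_one).
- by rewrite inE v_iso (isolated_mem v_iso).
- by rewrite inE u_iso (isolated_mem u_iso).
Qed.
End ProductGraph.

Section IsolatedCodes.
Variables (n m : nat) (C : {set vert n m}).
Hypothesis isolated_in_a_line : forall v, v \in C -> row_isolated C v || col_isolated C v.
Hypothesis all_columns_met : cs C = n.
Hypothesis all_rows_met : rs C = m.

Lemma row_isolated_of_column_mate u v :
  u \in C -> v \in C -> u != v -> u.1 = v.1 -> row_isolated C u.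
Proof.
move=> uC vC uv same_col; have := isolated_in_a_line uC.
case: (col_isolatedP uC) => [uiso|_]; last by rewrite orbF.
by move: uv; rewrite (uiso v vC (esym same_col)) eqxx.
Qed.

Lemma col_isolated_of_row_mate u v :
  u \in C -> v \in C -> u != v -> u.2 = v.2 -> col_isolated C u.
Proof.
move=> uC vC uv same_row; have := isolated_in_a_line uC.
case: (row_isolatedP uC) => [uiso|_] //.
by move: uv; rewrite (uiso v vC (esym same_row)) eqxx.
Qed.


(* Both grid vertices of column a cannot lie in C: they would be
   row-isolated, leaving no vertex of C for column b. *)
Lemma grid_column_not_full (a b : 'I_n) (r s : 'I_m) :
  a != b -> r != s -> grid_closed C a b r s -> (a, r) \in C -> (a, s) \in C -> False.
Proof.
move=> ne_ab ne_rs grid arC asC.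
have ar_as : (a, r) != (a, s) by rewrite xpair_eqE eqxx.
have as_ar : (a, s) != (a, r) by rewrite eq_sym.
have ar_iso := row_isolatedP arC (row_isolated_of_column_mate arC asC ar_as erefl).
have as_iso := row_isolatedP asC (row_isolated_of_column_mate asC arC as_ar erefl).
have [z zC zb] := columns_met all_columns_met b.
have := grid z zC; rewrite zb eqxx orbT => /esym/orP[]/eqP z_row.
- by move: ne_ab; rewrite -zb (ar_iso z zC z_row) eqxx.
- by move: ne_ab; rewrite -zb (as_iso z zC z_row) eqxx.
Qed.

Lemma grid_row_not_full (a b : 'I_n) (r s : 'I_m) :
  a != b -> r != s -> grid_closed C a b r s -> (a, r) \in C -> (b, r) \in C -> False.
Proof.
move=> ne_ab ne_rs grid arC brC.
have ar_br : (a, r) != (b, r) by rewrite xpair_eqE eqxx andbT.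
have br_ar : (b, r) != (a, r) by rewrite eq_sym.
have ar_iso := col_isolatedP arC (col_isolated_of_row_mate arC brC ar_br erefl).
have br_iso := col_isolatedP brC (col_isolated_of_row_mate brC arC br_ar erefl).
have [z zC zs] := rows_met all_rows_met s.
have := grid z zC; rewrite zs eqxx orbT => /orP[]/eqP z_col.
- by move: ne_rs; rewrite -zs (ar_iso z zC z_col) eqxx.
- by move: ne_rs; rewrite -zs (br_iso z zC z_col) eqxx.
Qed.

Lemma grid_corner_isolated (a b : 'I_n) (r s : 'I_m) :
  a != b -> r != s -> grid_closed C a b r s -> (a, r) \in C ->
  isolated C (a, r) /\ (b, s) \in C.
Proof.
move=> ne_ab ne_rs grid arC.
have column_a z : z \in C -> z.1 = a -> z = (a, r).
  move: z => [c t] zC /= c_a; subst c.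
  have := grid _ zC; rewrite /= eqxx => /esym/orP[]/eqP t_eq; subst t => //.
  by case: (grid_column_not_full ne_ab ne_rs grid arC zC).
have row_r z : z \in C -> z.2 = r -> z = (a, r).
  move: z => [c t] zC /= t_r; subst t.
  have := grid _ zC; rewrite /= eqxx => /orP[]/eqP c_eq; subst c => //.
  by case: (grid_row_not_full ne_ab ne_rs grid arC zC).
split; first by apply/andP; split; [apply/col_isolatedP | apply/row_isolatedP].
have [[c t] zC /= c_b] := columns_met all_columns_met b; subst c.
have := grid _ zC; rewrite /= eqxx orbT => /esym/orP[]/eqP t_eq; subst t => //.
by case: (row_r _ zC erefl) => b_a; move: ne_ab; rewrite b_a eqxx.
Qed.

(* A grid-closed code has two distinct isolated vertices: those of the
   diagonal through the vertex of C in column a. *)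
Lemma grid_two_isolated (a b : 'I_n) (r s : 'I_m) :
  a != b -> r != s -> grid_closed C a b r s ->
  exists u v, [/\ u != v, isolated C u & isolated C v].
Proof.
move=> ne_ab ne_rs grid; have ne_ba : b != a by rewrite eq_sym.
have diagonal (r' s' : 'I_m) : r' != s' -> grid_closed C a b r' s' -> (a, r') \in C ->
    exists u v, [/\ u != v, isolated C u & isolated C v].
  move=> ne_rs' grid' arC; have ne_sr' : s' != r' by rewrite eq_sym.
  have [ar_iso bsC] := grid_corner_isolated ne_ab ne_rs' grid' arC.
  have grid'' := grid_closed_swap_rows (grid_closed_swap_cols grid').
  have [bs_iso _] := grid_corner_isolated ne_ba ne_sr' grid'' bsC.
  by exists (a, r'), (b, s'); rewrite xpair_eqE (negbTE ne_ab).
have [[c t] zC /= c_a] := columns_met all_columns_met a; subst c.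
have := grid _ zC; rewrite /= eqxx => /esym/orP[]/eqP t_eq; subst t.
- exact: diagonal ne_rs grid zC.
- by apply: diagonal _ (grid_closed_swap_rows grid) zC; rewrite eq_sym.
Qed.
End IsolatedCodes.

Theorem mainTheorem12 (n m : nat) (C : {set vert n m}) :
  (exists (n1 n2 n3 : 'I_n) (m1 m2 m3 : 'I_m),
      [/\ (n1 < n2)%N, (n2 < n3)%N, (m1 < m2)%N, (m2 < m3)%N &
          [/\ (n1, m1) \in C, (n2, m2) \in C & (n3, m3) \in C]]) ->
  (forall v, v \in C -> row_isolated C v || col_isolated C v) ->
  rs C = m -> cs C = n ->
  #|[set v in C | isolated C v]| <= 1 ->
  identifying_code C.
Proof.
move=> [n1 [n2 [n3 [m1 [m2 [m3 [lt12 lt23 lt12' lt23' [aC bC cC]]]]]]]].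
move=> line_iso rsC csC at_most_one_isolated.
have ord_neq k (i j : 'I_k) : (i < j)%N -> i <> j.
  by move=> lt_ij eq_ij; rewrite eq_ij ltnn in lt_ij.
split.
  apply: (dominating_of_transversal aC bC cC); split => /=; apply: ord_neq => //.
  - exact: ltn_trans lt12 lt23.
  - exact: ltn_trans lt12' lt23'.
move=> [i r] [j s] ne_xy; apply/eqP => twins.
case: (eqVneq i j) => [eq_ij | ne_ij].
  by subst j; move: ne_xy; rewrite (twins_same_column twins rsC) eqxx.
case: (eqVneq r s) => [eq_rs | ne_rs].
  by subst s; move: ne_xy; rewrite (twins_same_row twins csC) eqxx.
have [u [v [ne_uv u_iso v_iso]]] :=
  grid_two_isolated line_iso csC rsC ne_ij ne_rs (twins_grid_closed ne_ij ne_rs twins).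
by move: ne_uv; rewrite (isolated_unique at_most_one_isolated u_iso v_iso) eqxx.
Qed.
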